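(* Let $\mathcal{L}$ be a distributed ledger object that guarantees eventual consistency. Consider the algorithm in which each process, to propose value $v$, executes: $\mathcal{L}.\mathrm{append}(v)$; $V_i\leftarrow\mathcal{L}.\mathrm{get}()$; while $V_i$ is the empty sequence, $V_i\leftarrow\mathcal{L}.\mathrm{get}()$; then decide the first value in $V_i$. This algorithm solves the consensus problem.
   Context: A ledger is a concurrent object holding a sequence $S$ of records (initially empty) with operations $\mathrm{get}()$ (returns the sequence) and $\mathrm{append}(r)$ (extends it with $r$); $\Vert$ denotes concatenation. Each operation has an invocation and a response event; a history is a sequence of such events in real-time order, complete if every operation in it has both events. Sequential specification: in a sequential history, if at the invocation of $\pi$ the ledger value is $V$ (initially empty), a $\mathrm{get}()$ returns $V$ and after an $\mathrm{append}(r)$ the value is $V\Vert r$. A sequence $X$ extends $Y$ if $Y$ is a prefix of $X$. A distributed ledger is eventually consistent if, for every complete history $H$, there is a permutation $\sigma$ of the operations of $H$ such that (a) $\sigma$ follows the sequential specification, and (b) there exists a complete history $H'$ extending $H$ such that for every complete history $H''$ extending $H'$, every complete $\mathrm{get}()$ operation in $H''\setminus H'$ returns a sequence containing $r$, for every $\mathrm{append}(r)$ in $H$. Consensus problem: in a system with at least one non-faulty process, each process $p_i$ proposes a value $v_i\in V$ and irrevocably decides a value $o_i\in V$ such that (Agreement) all decision values are identical; (Validity) if all proposals are the same value $v$, then $v$ is the only possible decision; (Termination) in any fair execution every non-faulty process decides. Processes may crash. *)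

From mathcomp Require Import all_boot.
Set Implicit Arguments. Unset Strict Implicit. Unset Printing Implicit Defensive.

Section Ledger.
Variables (P : finType) (V : eqType).

Inductive op := Get | Append of V.
Inductive ans := Ack | Ret of seq V.

Inductive levent := Inv of op | Res of ans.

Definition event := (P * levent)%type.

(** A (possibly infinite) execution: at step n there is at most one event
    ([None] = no event at that step, so finite executions are included). *)
Definition execution := nat -> option event.

Definition prefix (E : execution) (k : nat) : seq event := pmap E (iota 0 k).

Definition proj (p : P) (h : seq event) : seq levent :=
  pmap (fun e : event => if e.1 == p then Some e.2 else None) h.

Definition invs (t : seq levent) : seq op :=
  pmap (fun e => if e is Inv o then Some o else None) t.
Definition ress (t : seq levent) : seq ans :=
  pmap (fun e => if e is Res a then Some a else None) t.

(** An operation of a history is identified by (p, j): the j-th operation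
    invoked by process p.  Its invocation and (optional) response: *)
Definition op_at (h : seq event) (p : P) (j : nat) : option op :=
  onth (invs (proj p h)) j.
Definition ans_at (h : seq event) (p : P) (j : nat) : option ans :=
  onth (ress (proj p h)) j.

Definition is_op (h : seq event) (x : P * nat) : bool :=
  x.2 < size (invs (proj x.1 h)).
Definition is_complete_op (h : seq event) (x : P * nat) : bool :=
  isSome (ans_at h x.1 x.2).

(** An operation as it appears in a completion of h: complete operations keep
    their response; a pending append may be completed (response Ack). *)
Definition completed_op (h : seq event) (x : P * nat) : option (op * ans) :=
  match op_at h x.1 x.2, ans_at h x.1 x.2 with
  | Some o, Some a => Some (o, a)
  | Some (Append r), None => Some (Append r, Ack)
  | _, _ => None
  end.

Fixpoint legal_from (S : seq V) (s : seq (op * ans)) : bool :=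
  match s with
  | [::] => true
  | (Get, Ret R) :: s' => (R == S) && legal_from S s'
  | (Append r, Ack) :: s' => legal_from (rcons S r) s'
  | _ :: _ => false
  end.
Definition legal (s : seq (op * ans)) : bool := legal_from [::] s.

(** Eventual consistency of one execution of the ledger.
  (a) every (completion of a) history formed by the execution admits a
      permutation sigma of its operations that follows the sequential spec;
  (b) for every history H formed by the execution, there is a later point H'
      such that every get invoked after H' that completes returns a sequence
      containing r, for every append(r) completed in H. *)
Definition EC_exec (E : execution) : Prop :=
  (forall k, exists sigma : seq (P * nat),
      [/\ uniq sigma,
          all (fun x => isSome (completed_op (prefix E k) x)) sigma,
          (forall x, is_op (prefix E k) x -> is_complete_op (prefix E k) x ->
                     x \in sigma) &
          legal (pmap (completed_op (prefix E k)) sigma)])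
  /\
  (forall k, exists k', k <= k' /\
      forall (p : P) (j m : nat) (s : seq V),
        size (invs (proj p (prefix E k'))) <= j ->
        op_at (prefix E m) p j = Some Get ->
        ans_at (prefix E m) p j = Some (Ret s) ->
        forall (q : P) (i : nat) (r : V),
          op_at (prefix E k) q i = Some (Append r) ->
          is_complete_op (prefix E k) (q, i) ->
          r \in s).

Definition ledger := execution -> Prop.

Definition eventually_consistent (L : ledger) : Prop :=
  forall E, L E -> EC_exec E.

(** The algorithm of each process proposing v:
    L.append(v); V <- L.get(); while V = [] do V <- L.get(); decide head V. *)
Inductive astate := AStart | AAppending | AReady | AGetting | ADecided of V.

Definition astep (v : V) (st : option astate) (e : levent) : option astate :=
  match st with
  | None => None
  | Some st =>
    match st, e with
    | AStart, Inv (Append r) => if r == v then Some AAppending else None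
    | AAppending, Res Ack => Some AReady
    | AReady, Inv Get => Some AGetting
    | AGetting, Res (Ret [::]) => Some AReady
    | AGetting, Res (Ret (x :: _)) => Some (ADecided x)
    | _, _ => None
    end
  end.

Definition arun (v : V) (t : seq levent) : option astate :=
  foldl (astep v) (Some AStart) t.

(** Every process (faulty or not) follows the algorithm, until it possibly
    crashes (stops). *)
Definition follows_alg (E : execution) (prop : P -> V) : Prop :=
  forall p k, arun (prop p) (proj p (prefix E k)) <> None.

Definition decides (E : execution) (prop : P -> V) (p : P) (o : V) : Prop :=
  exists k, arun (prop p) (proj p (prefix E k)) = Some (ADecided o).

(** Fairness: a non-faulty process that has not decided keeps taking steps
    (its invocations are issued and the ledger responds to them). *)
Definition fair (E : execution) (prop : P -> V) (correct : pred P) : Prop :=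
  forall p, correct p -> forall k,
    (forall o, arun (prop p) (proj p (prefix E k)) <> Some (ADecided o)) ->
    exists k', size (proj p (prefix E k)) < size (proj p (prefix E k')).

Definition consensus_agreement (E : execution) (prop : P -> V) : Prop :=
  forall p q o o', decides E prop p o -> decides E prop q o' -> o = o'.
Definition consensus_validity (E : execution) (prop : P -> V) : Prop :=
  forall v, (forall p, prop p = v) -> forall p o, decides E prop p o -> o = v.
Definition consensus_termination (E : execution) (prop : P -> V)
    (correct : pred P) : Prop :=
  forall p, correct p -> exists o, decides E prop p o.

End Ledger.

From Pilot Require Import Defs.
From mathcomp Require Import all_boot zify.
From Stdlib Require Import Classical.
Set Implicit Arguments. Unset Strict Implicit. Unset Printing Implicit Defensive.

(* Eventual consistency (a) linearizes every history, so all gets return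
   prefixes of one sequence of appended values: two non-empty returns share
   their first element (agreement), and that element was appended, hence
   proposed, by some process (validity).  A correct process that never decides
   keeps issuing gets that return the empty sequence; but by (b) every get it
   invokes late enough contains its own appended proposal (termination). *)

Section SequentialLedger.
Variable V : eqType.
Implicit Types (S A R : seq V) (s : seq (op V * ans V)).

Definition get_returns s : seq (seq V) :=
  pmap (fun x => if x is (Get, Ret R) then Some R else None) s.

Definition appended s : seq V :=
  pmap (fun x => if x.1 is Append r then Some r else None) s.

Lemma legal_from_get_prefix S s R :
  legal_from S s -> R \in get_returns s -> prefix R (S ++ appended s).
Proof.
elim: s S => [|[[|r] [|R']] s IH] S //=.
- case/andP=> /eqP -> legal_s; rewrite in_cons.
  by case/predU1P=> [->|]; [exact: prefix_prefix | exact: IH].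
- by move=> legal_s /(IH _ legal_s); rewrite cat_rcons.
Qed.

Lemma prefix_cons_head (a b : V) R R' A :
  prefix (a :: R) A -> prefix (b :: R') A -> a = b.
Proof. by case: A => //= c A /andP[/eqP-> _] /andP[/eqP-> _]. Qed.

End SequentialLedger.

Section Algorithm.
Variables (V : eqType) (v : V).
Implicit Types (t u : seq (levent V)).

Lemma foldl_astep_None t : foldl (astep v) None t = None.
Proof. by elim: t. Qed.

Lemma foldl_astep_decided (o : V) t :
  foldl (astep v) (Some (ADecided o)) t = if t is [::] then Some (ADecided o) else None.
Proof. by case: t => [|[[|r]|a] t] //=; rewrite foldl_astep_None. Qed.

Lemma ready_decided o u : foldl (astep v) (Some (AReady V)) u = Some (ADecided o) ->
  exists j s, onth (invs u) j = Some (Get V) /\ onth (ress u) j = Some (Ret (o :: s)).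
Proof.
have [n] := ubnP (size u); elim: n u => // n IH.
case=> [|[[|r]|a] [|[o'|[|[|x s]]] u]] //= size_u;
  rewrite ?foldl_astep_None ?foldl_astep_decided //.
- by case/IH=> [|j [s [? ?]]]; [lia | exists j.+1, s].
- by case: u {size_u} => // -[<-]; exists 0, s.
Qed.

Lemma ready_undecided_get j u : foldl (astep v) (Some (AReady V)) u <> None ->
  (forall o, foldl (astep v) (Some (AReady V)) u <> Some (ADecided o)) ->
  2 * j + 2 <= size u ->
  onth (invs u) j = Some (Get V) /\ onth (ress u) j = Some (Ret [::]).
Proof.
elim: j u => [|j IH] [|[[|r]|a] [|[o'|[|[|x s]]] u]] //=;
  rewrite ?foldl_astep_None ?foldl_astep_decided //;
  try by case: u => [_ /(_ x)|].
- by move=> _ _; lia.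
- by move=> ready undecided size_u; apply: IH => //; lia.
Qed.

Lemma foldl_astep_append st t j r : foldl (astep v) st t <> None ->
  onth (invs t) j = Some (Append r) -> r = v.
Proof.
elim: t st j => [|[[|r']|a] t IH] st j //=; first by case: j.
- by case: j => //= j /IH; apply.
- case: j => [|j] /=; last exact: IH.
  case: st => [[]|] //=; rewrite ?foldl_astep_None //.
  by case: eqP => [-> _ [->]|]; rewrite ?foldl_astep_None.
- by move/IH; apply.
Qed.

Lemma arun_shape t : arun v t <> None ->
  [\/ t = [::], t = [:: Inv (Append v)] |
      exists2 u, t = [:: Inv (Append v), Res (Ack V) & u]
               & foldl (astep v) (Some (AReady V)) u <> None].
Proof.
rewrite /arun; case: t => [|[[|r]|a] t] /=; rewrite ?foldl_astep_None //;
  first by constructor 1.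
case: eqP => [->|]; rewrite ?foldl_astep_None //.
case: t => [|[o|[|R]] u] /=; rewrite ?foldl_astep_None //.
- by constructor 2.
- by constructor 3; exists u.
Qed.

Lemma arun_decided o t : arun v t = Some (ADecided o) ->
  exists j s, onth (invs t) j = Some (Get V) /\ onth (ress t) j = Some (Ret (o :: s)).
Proof.
move=> decided; have /arun_shape : arun v t <> None by rewrite decided.
case=> [tE | tE | [u tE _]]; rewrite tE /arun /= ?eqxx // in decided *.
by have [j [s [? ?]]] := ready_decided decided; exists j.+1, s.
Qed.

Lemma arun_started t : arun v t <> None -> 2 <= size t ->
  onth (invs t) 0 = Some (Append v) /\ onth (ress t) 0 = Some (Ack V).
Proof. by case/arun_shape=> [-> | -> | [u -> _]]. Qed.

Lemma arun_undecided_get j t : arun v t <> None ->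
  (forall o, arun v t <> Some (ADecided o)) -> 2 * j + 4 <= size t ->
  onth (invs t) j.+1 = Some (Get V) /\ onth (ress t) j.+1 = Some (Ret [::]).
Proof.
case/arun_shape=> [-> | -> | [u -> ready]] undecided /= size_t; try lia.
rewrite /arun /= eqxx /= in undecided.
apply: ready_undecided_get => //; lia.
Qed.

End Algorithm.

Section Histories.
Variables (P : finType) (V : eqType).
Implicit Types (h : seq (event P V)) (sigma : seq (P * nat)).

Lemma op_at_cat h h' p j o : op_at h p j = Some o -> op_at (h ++ h') p j = Some o.
Proof.
rewrite /op_at /proj /invs !pmap_cat onth_cat => hj.
by rewrite -onthTE hj.
Qed.

Lemma ans_at_cat h h' p j a : ans_at h p j = Some a -> ans_at (h ++ h') p j = Some a.
Proof.
rewrite /ans_at /proj /ress !pmap_cat onth_cat => hj.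
by rewrite -onthTE hj.
Qed.

Lemma get_returns_completed h sigma x R : x \in sigma ->
  completed_op h x = Some (Get V, Ret R) ->
  R \in get_returns (pmap (completed_op h) sigma).
Proof.
elim: sigma => // y sigma IH; rewrite in_cons => /predU1P[<- /= -> | /IH + hx] /=.
  exact: mem_head.
by case: (completed_op h y) => [[[|r] [|R']]|] //= /(_ hx);
  rewrite ?in_cons => ->; rewrite ?orbT.
Qed.

Lemma appended_completed h sigma r : r \in appended (pmap (completed_op h) sigma) ->
  exists x, op_at h x.1 x.2 = Some (Append r).
Proof.
elim: sigma => //= x sigma IH; rewrite /completed_op.
case hx: (op_at h x.1 x.2) => [[|r']|]; case: (ans_at h x.1 x.2) => [a|] //=;
  by rewrite in_cons => /predU1P[-> | /IH]; first exists x.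
Qed.

Lemma linearization_value h sigma :
  (forall x, is_op h x -> is_complete_op h x -> x \in sigma) ->
  legal (pmap (completed_op h) sigma) ->
  exists A, (forall r, r \in A -> exists x, op_at h x.1 x.2 = Some (Append r)) /\
    forall p j R, op_at h p j = Some (Get V) -> ans_at h p j = Some (Ret R) ->
      prefix R A.
Proof.
move=> covers legal_sigma; exists (appended (pmap (completed_op h) sigma)).
split=> [r|p j R get ret]; first exact: appended_completed.
apply: (legal_from_get_prefix legal_sigma).
apply: (get_returns_completed (x := (p, j))); last by rewrite /completed_op /= get ret.
apply: covers; last by rewrite /is_complete_op /= ret.
by rewrite /is_op -onthTE; move: get; rewrite /op_at => ->.
Qed.

End Histories.

Section Execution.
Variables (P : finType) (V : eqType) (E : execution P V) (prop : P -> V).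
Local Notation hist := (Defs.prefix E).

Lemma hist_cat k1 k : k1 <= k -> exists h, hist k = hist k1 ++ h.
Proof.
move=> le_k1k; exists (pmap E (iota k1 (k - k1))).
by rewrite /Defs.prefix -pmap_cat -iotaD subnKC.
Qed.

Lemma op_at_hist_mono k1 k p j o : k1 <= k ->
  op_at (hist k1) p j = Some o -> op_at (hist k) p j = Some o.
Proof. by case/hist_cat=> h ->; apply: op_at_cat. Qed.

Lemma ans_at_hist_mono k1 k p j a : k1 <= k ->
  ans_at (hist k1) p j = Some a -> ans_at (hist k) p j = Some a.
Proof. by case/hist_cat=> h ->; apply: ans_at_cat. Qed.

Lemma decides_get_return p o : decides E prop p o ->
  exists k j s, op_at (hist k) p j = Some (Get V) /\
                ans_at (hist k) p j = Some (Ret (o :: s)).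
Proof. by case=> k /arun_decided[j [s [get ret]]]; exists k, j, s. Qed.

Lemma fair_unbounded correct p : fair E prop correct -> correct p ->
  (forall k o, arun (prop p) (proj p (hist k)) <> Some (ADecided o)) ->
  forall n, exists k, n <= size (proj p (hist k)).
Proof.
move=> fairE correct_p undecided; elim=> [|n [k le_nk]]; first by exists 0.
have [k' lt_kk'] := fairE p correct_p k (undecided k).
by exists k'; apply: leq_ltn_trans lt_kk'.
Qed.

Hypotheses (EC : EC_exec E) (follows : follows_alg E prop).

Lemma ec_agreement : consensus_agreement E prop.
Proof.
move=> p q o o' /decides_get_return[k1 [j1 [s1 [get1 ret1]]]].
move=> /decides_get_return[k2 [j2 [s2 [get2 ret2]]]].
have [sigma [_ _ covers legal_sigma]] := EC.1 (maxn k1 k2).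
have [A [_ returns]] := linearization_value covers legal_sigma.
apply: (@prefix_cons_head _ _ _ s1 s2 A); apply: returns.
- exact: op_at_hist_mono (leq_maxl k1 k2) get1.
- exact: ans_at_hist_mono (leq_maxl k1 k2) ret1.
- exact: op_at_hist_mono (leq_maxr k1 k2) get2.
- exact: ans_at_hist_mono (leq_maxr k1 k2) ret2.
Qed.

Lemma ec_validity : consensus_validity E prop.
Proof.
move=> v all_v p o /decides_get_return[k [j [s [get ret]]]].
have [sigma [_ _ covers legal_sigma]] := EC.1 k.
have [A [appended returns]] := linearization_value covers legal_sigma.
have /appended[x append_x] : o \in A.
  by have /(catl_prefix (s1 := [:: o]))/prefix1s := returns _ _ _ get ret.
by rewrite -(all_v x.1); exact: foldl_astep_append (@follows x.1 k) append_x.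
Qed.

Lemma ec_termination correct : fair E prop correct ->
  consensus_termination E prop correct.
Proof.
move=> fairE p correct_p; apply: NNPP => never_decides.
have undecided k o : arun (prop p) (proj p (hist k)) <> Some (ADecided o).
  by move=> decided; apply: never_decides; exists o, k.
have grows := fair_unbounded fairE correct_p undecided.
have [k0 size_k0] := grows 2.
have [append0 ack0] := arun_started (@follows p k0) size_k0.
have [k' [_ visible]] := EC.2 k0.
set j := size (invs (proj p (hist k'))).
have [m size_m] := grows (2 * j + 4).
have [get ret] := arun_undecided_get (@follows p m) (undecided m) size_m.
have := visible p j.+1 m [::] (leqnSn j) get ret p 0 (prop p) append0.
by rewrite /is_complete_op /ans_at ack0 => /(_ isT).
Qed.

End Execution.

Theorem lemma2 (P : finType) (V : eqType) (L : ledger P V) :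
  eventually_consistent L ->
  forall (prop : P -> V) (correct : pred P) (E : execution P V),
    (exists p, correct p) ->
    L E -> follows_alg E prop -> fair E prop correct ->
    [/\ consensus_agreement E prop,
        consensus_validity E prop &
        consensus_termination E prop correct].
Proof.
move=> ec_L prop correct E _ LE follows fairE.
have EC := ec_L E LE.
split; [exact: ec_agreement | exact: ec_validity | exact: ec_termination].
Qed.
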